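(* For every integer $m\geq 1$, $$A_{2,m}=\frac{(m-1)m(m+1)(m+\lambda)(m+\lambda+1)(m+\lambda+2)\big[m^2+(\lambda+1)m+\frac{4\lambda^2+2\lambda-14}{3(2\lambda+3)}\big]}{2(2\lambda+1)(2\lambda+5)}$$ and $$\widetilde A_{2,m}=\frac{(m-1)m(m+\lambda)(m+\lambda+1)\,r_\lambda(m)}{24(2\lambda+1)(2\lambda+3)(2\lambda+5)},$$ where $$r_\lambda(m)=12(2\lambda+3)m^4+24\lambda(2\lambda+3)m^3+4(6\lambda^3+7\lambda^2-19\lambda-32)m^2-4\lambda(2\lambda^2+19\lambda+32)m-8\lambda^3-20\lambda^2+14\lambda+71.$$
   Context: Fix $\lambda>-1/2$. Define polynomials $Q_m$ by $Q_0=1$, $Q_1(\mu)=1-\frac{2(\lambda+1)(\lambda+2)}{2\lambda+1}\mu$ and, for $m\geq2$, $$Q_m-Q_{m-1}=\frac{m(2m-1)(2m+\lambda)}{(m-1+\lambda)(2m-2+\lambda)(2m-1+2\lambda)}\big[Q_{m-1}-Q_{m-2}\big]-\frac{2m(2m-1+\lambda)(2m+\lambda)}{2m-1+2\lambda}\,\mu\,Q_{m-1}(\mu).$$ Define $\widetilde Q_m$ by $\widetilde Q_0=1$, $\widetilde Q_1(\mu)=1-\frac{\lambda+1}{2}\mu$ and, for $m\geq2$, $$\widetilde Q_m-\widetilde Q_{m-1}=\frac{(m-1)(2m-1)(2m-1+\lambda)}{(m-1+\lambda)(2m-3+\lambda)(2m-3+2\lambda)}\big[\widetilde Q_{m-1}-\widetilde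 Q_{m-2}\big]-\frac{(2m-1)(2m-2+\lambda)(2m-1+\lambda)}{2(m-1+\lambda)}\,\mu\,\widetilde Q_{m-1}(\mu).$$ Write $Q_m(\mu)=\sum_{i=0}^m(-1)^iA_{i,m}\mu^i$ and $\widetilde Q_m(\mu)=\sum_{i=0}^m(-1)^i\widetilde A_{i,m}\mu^i$, with $A_{i,m}=\widetilde A_{i,m}=0$ for $i>m$. *)

From mathcomp Require Import all_boot all_order all_algebra.
Set Implicit Arguments. Unset Strict Implicit. Unset Printing Implicit Defensive.
Import Order.TTheory GRing.Theory Num.Theory.
Local Open Scope ring_scope.

Section Qdefs.
Variable R : realFieldType.
Variable l : R.

Definition qc1 (m : nat) : R :=
  (m%:R * (2 * m%:R - 1) * (2 * m%:R + l)) /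
  ((m%:R - 1 + l) * (2 * m%:R - 2 + l) * (2 * m%:R - 1 + 2 * l)).
Definition qc2 (m : nat) : R :=
  (2 * m%:R * (2 * m%:R - 1 + l) * (2 * m%:R + l)) / (2 * m%:R - 1 + 2 * l).

Definition tc1 (m : nat) : R :=
  ((m%:R - 1) * (2 * m%:R - 1) * (2 * m%:R - 1 + l)) /
  ((m%:R - 1 + l) * (2 * m%:R - 3 + l) * (2 * m%:R - 3 + 2 * l)).
Definition tc2 (m : nat) : R :=
  ((2 * m%:R - 1) * (2 * m%:R - 2 + l) * (2 * m%:R - 1 + l)) / (2 * (m%:R - 1 + l)).

(* generic three-term recurrence: returns (P_n, P_{n+1}) where
   P_m = P_{m-1} + c1 m * (P_{m-1} - P_{m-2}) - c2 m * 'X * P_{m-1} for m >= 2 *)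
Fixpoint rec_pair (P0 P1 : {poly R}) (c1 c2 : nat -> R) (n : nat)
  : {poly R} * {poly R} :=
  match n with
  | 0 => (P0, P1)
  | k.+1 => let: (a, b) := rec_pair P0 P1 c1 c2 k in
            (b, b + c1 k.+2 *: (b - a) - c2 k.+2 *: ('X * b))
  end.

Definition Q (m : nat) : {poly R} :=
  (rec_pair 1 (1 - ((2 * (l + 1) * (l + 2)) / (2 * l + 1)) *: 'X) qc1 qc2 m).1.

Definition Qt (m : nat) : {poly R} :=
  (rec_pair 1 (1 - ((l + 1) / 2) *: 'X) tc1 tc2 m).1.

(* Q_m = sum_i (-1)^i A_{i,m} mu^i ; coefficients beyond the degree are 0 *)
Definition A (i m : nat) : R := (-1) ^+ i * (Q m)`_i.
Definition At (i m : nat) : R := (-1) ^+ i * (Qt m)`_i.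

Definition r_l (m : R) : R :=
  12 * (2 * l + 3) * m ^+ 4 + 24 * l * (2 * l + 3) * m ^+ 3
  + 4 * (6 * l ^+ 3 + 7 * l ^+ 2 - 19 * l - 32) * m ^+ 2
  - 4 * l * (2 * l ^+ 2 + 19 * l + 32) * m
  - 8 * l ^+ 3 - 20 * l ^+ 2 + 14 * l + 71.

End Qdefs.

From mathcomp Require Import all_boot all_order all_algebra.
From mathcomp Require Import ring lra.
Import Order.TTheory GRing.Theory Num.Theory.
Local Open Scope ring_scope.

(* Comparing coefficients of mu^i in the three-term recurrence shows that the
   signed coefficients A_{i,m} obey a recurrence in m whose only inhomogeneous
   term is c2(m) A_{i-1,m-1}.  Hence the closed forms for A_{0,m} = 1, A_{1,m}
   and A_{2,m} (and likewise for the tilde family) follow by induction on m,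
   each step being an identity between rational functions of m and lambda
   whose denominators do not vanish because lambda > -1/2. *)

Section SignedCoefficients.
Context {R : realFieldType} {P0 P1 : {poly R}} {c1 c2 : nat -> R}.
Context {d : nat} {a : nat -> nat -> R}.
Hypothesis a_init : forall i, (i <= d)%N ->
  (-1) ^+ i * P0`_i = a i 0 /\ (-1) ^+ i * P1`_i = a i 1.
Hypothesis a_rec : forall i k, (i <= d)%N ->
  a i k.+2 = a i k.+1 + c1 k.+2 * (a i k.+1 - a i k)
             + c2 k.+2 * (if i is j.+1 then a j k.+1 else 0).

Lemma signed_coef_rec_pair n i : (i <= d)%N ->
  (-1) ^+ i * (rec_pair P0 P1 c1 c2 n).1`_i = a i n /\
  (-1) ^+ i * (rec_pair P0 P1 c1 c2 n).2`_i = a i n.+1.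
Proof.
elim: n i => [|n IH] i le_id /=; first exact: a_init.
case: (rec_pair P0 P1 c1 c2 n) IH => p q /= IH.
have [ap aq] := IH i le_id; split=> //.
rewrite a_rec // -ap -aq coefB coefD !coefZ coefB coefXM.
case: i le_id {ap aq} => [|j] le_jd /=; first by ring.
by rewrite -(IH j (ltnW le_jd)).2 exprS; ring.
Qed.

End SignedCoefficients.

Section ClosedForms.
Context {R : realFieldType} (l : R).
Hypothesis l_gt : - (1 / 2) < l.

Definition A1 (x : R) : R := x * (x + 1) * (x + l) * (x + l + 1) / (2 * l + 1).
Definition A2 (x : R) : R :=
  ((x - 1) * x * (x + 1) * (x + l) * (x + l + 1) * (x + l + 2)
   * (x ^+ 2 + (l + 1) * x + (4 * l ^+ 2 + 2 * l - 14) / (3 * (2 * l + 3))))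
  / (2 * (2 * l + 1) * (2 * l + 5)).

Definition At1 (x : R) : R :=
  x * (x + l) * (2 * x ^+ 2 + 2 * l * x - 1) / (2 * (2 * l + 1)).
Definition At2 (x : R) : R :=
  ((x - 1) * x * (x + l) * (x + l + 1) * r_l l x)
  / (24 * (2 * l + 1) * (2 * l + 3) * (2 * l + 5)).

Definition A_closed (i m : nat) : R :=
  match i with 0 => 1 | 1 => A1 m%:R | 2 => A2 m%:R | _ => 0 end.
Definition At_closed (i m : nat) : R :=
  match i with 0 => 1 | 1 => At1 m%:R | 2 => At2 m%:R | _ => 0 end.

Lemma A_closed_init i : (i <= 2)%N ->
  (-1) ^+ i * (1 : {poly R})`_i = A_closed i 0 /\
  (-1) ^+ i * (1 - ((2 * (l + 1) * (l + 2)) / (2 * l + 1)) *: 'X : {poly R})`_i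
  = A_closed i 1.
Proof.
rewrite /A_closed /A1 /A2; case: i => [|[|[|]]] //= _;
  rewrite !(coefB, coef1, coefZ, coefX) /=;
  by split; field; repeat (apply/andP; split); move: l_gt; lra.
Qed.

Lemma At_closed_init i : (i <= 2)%N ->
  (-1) ^+ i * (1 : {poly R})`_i = At_closed i 0 /\
  (-1) ^+ i * (1 - ((l + 1) / 2) *: 'X : {poly R})`_i = At_closed i 1.
Proof.
rewrite /At_closed /At1 /At2 /r_l; case: i => [|[|[|]]] //= _;
  rewrite !(coefB, coef1, coefZ, coefX) /=;
  by split; field; repeat (apply/andP; split); move: l_gt; lra.
Qed.

Lemma A_closed_rec i k : (i <= 2)%N ->
  A_closed i k.+2 = A_closed i k.+1 + qc1 l k.+2 * (A_closed i k.+1 - A_closed i k)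
                    + qc2 l k.+2 * (if i is j.+1 then A_closed j k.+1 else 0).
Proof.
rewrite /A_closed /A1 /A2 /qc1 /qc2 -!natr1.
have := ler0n R k; move: k%:R => x x_ge0.
by case: i => [|[|[|]]] //= _; field;
  repeat (apply/andP; split); move: l_gt x_ge0; lra.
Qed.

Lemma At_closed_rec i k : (i <= 2)%N ->
  At_closed i k.+2 = At_closed i k.+1 + tc1 l k.+2 * (At_closed i k.+1 - At_closed i k)
                     + tc2 l k.+2 * (if i is j.+1 then At_closed j k.+1 else 0).
Proof.
rewrite /At_closed /At1 /At2 /r_l /tc1 /tc2 -!natr1.
have := ler0n R k; move: k%:R => x x_ge0.
by case: i => [|[|[|]]] //= _; field;
  repeat (apply/andP; split); move: l_gt x_ge0; lra.
Qed.

End ClosedForms.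

Theorem lemma3p4 (R : realFieldType) (l : R) (hl : - (1 / 2) < l)
  (m : nat) (hm : (1 <= m)%N) :
  A l 2 m =
    ((m%:R - 1) * m%:R * (m%:R + 1) * (m%:R + l) * (m%:R + l + 1) * (m%:R + l + 2)
     * (m%:R ^+ 2 + (l + 1) * m%:R
        + (4 * l ^+ 2 + 2 * l - 14) / (3 * (2 * l + 3))))
    / (2 * (2 * l + 1) * (2 * l + 5))
  /\
  At l 2 m =
    ((m%:R - 1) * m%:R * (m%:R + l) * (m%:R + l + 1) * r_l l m%:R)
    / (24 * (2 * l + 1) * (2 * l + 3) * (2 * l + 5)).
Proof.
have [A2m _] :=
  signed_coef_rec_pair (A_closed_init l hl) (A_closed_rec l hl) m 2 (leqnn 2).
have [At2m _] :=
  signed_coef_rec_pair (At_closed_init l hl) (At_closed_rec l hl) m 2 (leqnn 2).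
by rewrite /A /At /Q /Qt A2m At2m.
Qed.
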